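(* Let $f:\mathbb{R}^d\to\mathbb{R}$ be $L$-smooth. Let $X\subseteq\mathbb{R}^d$ be a set with $\mathcal{L}(X)=0$ (for example, a finite set of points), and let $W\subseteq\mathbb{R}^d$ be a set with $\mathcal{L}(W)>0$. Run gradient descent $x_t=x_{t-1}-\gamma\nabla f(x_{t-1})$, $t=1,2,\dots$, with learning rate $\gamma\le\frac{1}{2L}$ and $x_0$ drawn uniformly at random from $W$. Then the probability that $x_t\in X$ for some $t$ during training is $0$.
   Context: $\mathcal{L}(S)$ denotes the Lebesgue measure of $S\subseteq\mathbb{R}^d$. A function $f$ is $L$-smooth if it is differentiable and there is a constant $L>0$ with $\|\nabla f(x)-\nabla f(y)\|\le L\|x-y\|$ for all $x,y\in\mathbb{R}^d$. ''Random initialization over $W$'' means $x_0$ is sampled uniformly from $W$. *)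

(* R^d is rendered as row vectors 'rV[R]_d. *)
From HB Require Import structures.
From mathcomp Require Import all_boot all_order all_algebra.
From mathcomp Require Import all_classical all_reals all_analysis.
Set Implicit Arguments. Unset Strict Implicit. Unset Printing Implicit Defensive.
Import Order.TTheory GRing.Theory Num.Theory.
Import numFieldNormedType.Exports.
Local Open Scope classical_set_scope.
Local Open Scope ring_scope.

Section Defs.
Variables (R : realType) (d : nat).

(* Euclidean norm on R^d (MathComp's built-in norm on 'rV is the sup norm). *)
Definition enorm (v : 'rV[R]_d) : R := Num.sqrt (\sum_(i < d) v ord0 i ^+ 2).

Definition grad (f : 'rV[R]_d -> R) (x : 'rV[R]_d) : 'rV[R]_d :=
  \row_(i < d) ('d f x) (delta_mx ord0 i).

Definition L_smooth (f : 'rV[R]_d -> R) (L : R) : Prop :=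
  [/\ forall x, differentiable f x,
      0 < L &
      forall x y, enorm (grad f x - grad f y) <= L * enorm (x - y)].

Definition box (a b : 'rV[R]_d) : set 'rV[R]_d :=
  [set x | forall i, a ord0 i <= x ord0 i <= b ord0 i].

Definition box_vol (a b : 'rV[R]_d) : R :=
  \prod_(i < d) Num.max 0 (b ord0 i - a ord0 i).

Definition lebesgue_outer (A : set 'rV[R]_d) : \bar R :=
  ereal_inf [set s | exists a b : nat -> 'rV[R]_d,
     A `<=` \bigcup_k box (a k) (b k) /\
     s = (\sum_(0 <= k <oo) (box_vol (a k) (b k))%:E)%E].

Definition lebesgue_measurable (A : set 'rV[R]_d) : Prop :=
  forall E, lebesgue_outer E = (lebesgue_outer (E `&` A) + lebesgue_outer (E `&` ~` A))%E.

(* Probability of event E when x_0 is drawn uniformly from W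
   (W measurable, 0 < L(W) < +oo): L(E /\ W) / L(W). *)
Definition gd_uniform_prob (W E : set 'rV[R]_d) : \bar R :=
  (lebesgue_outer (E `&` W) * ((fine (lebesgue_outer W))^-1)%:E)%E.

Definition gd (f : 'rV[R]_d -> R) (gamma : R) (x0 : 'rV[R]_d) (t : nat) : 'rV[R]_d :=
  iter t (fun x => x - gamma *: grad f x) x0.

End Defs.

(* For gamma <= 1/(2L) the gradient step T x = x - gamma grad f(x) satisfies
   |x - y| <= 2 |T x - T y|: the gradient term moves x - y by at most half of
   its length.  So T is injective with a Lipschitz inverse, and the preimage of
   a box B has outer measure at most K vol(B) for a constant K: cut B into a fine
   grid of cubes, the preimage of each cube lies in a cube of comparable side.
   Consequently T-preimages of null sets are null, and the initialisations that
   ever reach X form the countable union over t of the preimages of X under the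
   t-th iterate of T, a null set. *)

From HB Require Import structures.
From mathcomp Require Import all_boot all_order all_algebra.
From mathcomp Require Import all_classical all_reals all_analysis.
From mathcomp Require Import ring lra.
Import Order.TTheory GRing.Theory Num.Theory.
Import numFieldNormedType.Exports.
Local Open Scope classical_set_scope.
Local Open Scope ring_scope.

Section lebesgue_outer.
Context {R : realType} {d : nat}.
Local Notation V := 'rV[R]_d.
Local Notation outer := (@lebesgue_outer R d).
Local Notation vol := (@box_vol R d).
Implicit Types (A B : set V) (a b : V).

Lemma box_vol_ge0 a b : 0 <= vol a b.
Proof. by apply: prodr_ge0 => i _; rewrite le_max lexx. Qed.

Lemma box_vol_centered (z : V) (r : R) : 0 <= r ->
  vol (z - const_mx r) (z + const_mx r) = (2 * r) ^+ d.
Proof.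
move=> r0; rewrite /box_vol (eq_bigr (fun=> 2 * r)) ?prodr_const ?card_ord // => i _.
rewrite !mxE (_ : _ + r - _ = 2 * r); last by ring.
by apply/max_idPr; lra.
Qed.

Lemma lebesgue_outer_ge0 A : (0 <= outer A)%E.
Proof.
apply: le_ereal_inf_tmp => _ [a [b [_ ->]]].
by apply: nneseries_ge0 => k _; rewrite lee_fin box_vol_ge0.
Qed.

Lemma lebesgue_outer_le_cover A (a b : nat -> V) :
  A `<=` \bigcup_k box (a k) (b k) ->
  (outer A <= \sum_(0 <= k <oo) (vol (a k) (b k))%:E)%E.
Proof. by move=> Acov; apply: ereal_inf_lbound; exists a, b. Qed.

Lemma le_lebesgue_outer A B : A `<=` B -> (outer A <= outer B)%E.
Proof.
move=> AB; apply: le_ereal_inf_tmp => _ [a [b [Bcov ->]]].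
exact/lebesgue_outer_le_cover/(subset_trans AB).
Qed.

Lemma subset_lebesgue_outer0 {A B} : A `<=` B -> outer B = 0%E -> outer A = 0%E.
Proof.
move=> AB B0; apply/eqP; rewrite eq_le lebesgue_outer_ge0 andbT -B0.
exact: le_lebesgue_outer.
Qed.

Lemma lebesgue_outer_cover_approx A e : outer A \is a fin_num -> 0 < e ->
  exists a b : nat -> V, A `<=` \bigcup_k box (a k) (b k) /\
    (\sum_(0 <= k <oo) (vol (a k) (b k))%:E <= outer A + e%:E)%E.
Proof.
move=> Afin e0; have [_ [a [b [Acov ->]]] lt] := lb_ereal_inf_adherent e0 Afin.
by exists a, b; split => //; exact: ltW.
Qed.

Lemma lebesgue_outer_le_cover2 A (a b : nat -> nat -> V) :
  A `<=` \bigcup_i \bigcup_j box (a i j) (b i j) ->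
  (outer A <= \sum_(0 <= i <oo) \sum_(0 <= j <oo) (vol (a i j) (b i j))%:E)%E.
Proof.
move=> Acov; have /card_esym/ppcard_eqP[g] := card_nat2.
pose F (p : nat * nat) := (vol (a p.1 p.2) (b p.1 p.2))%:E.
have F0 p : (0 <= F p)%E by rewrite lee_fin box_vol_ge0.
apply: (@le_trans _ _ (\sum_(0 <= n <oo) F (g n))%E).
  apply: lebesgue_outer_le_cover => x /Acov[i _ [j _ xij]].
  by exists (g^-1%FUN (i, j)) => //=; rewrite /F invK ?inE.
have -> : (\sum_(0 <= n <oo) F (g n) = \esum_(p in [set: nat * nat]) F p)%E.
  by rewrite -(esum_pred_image F g xpredT) ?[fun=> _]set_true// image_eq.
have -> : [set: nat * nat] = [set: nat] `*`` (fun=> [set: nat]).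
  by apply/seteqP; split => -[].
rewrite (@eq_esum _ _ _ _ (fun k => F (k.1, k.2))); last by move=> [].
rewrite -(@esum_esum _ _ _ _ _ (fun i j => F (i, j))) //= nneseries_esumT; last first.
  by move=> i; apply: nneseries_ge0 => j _ _; exact: (F0 (i, j)).
by apply: le_esum => i _; rewrite nneseries_esumT // => j; exact: (F0 (i, j)).
Qed.

Lemma lebesgue_outer_bigcup_le (A : nat -> set V) :
  (outer (\bigcup_i A i) <= \sum_(0 <= i <oo) outer (A i))%E.
Proof.
have A0 i : (0 <= outer (A i))%E := lebesgue_outer_ge0 (A i).
have [Afin|] := pselect (forall i, outer (A i) \is a fin_num); last first.
  move=> /existsNP[i]; rewrite ge0_fin_numE // ltey => /negP/negPn/eqP Ai.
  by rewrite (nneseries_pinfty _ _ Ai) ?leey.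
apply/lee_addgt0Pr => e e0.
have /choice[ab abP] : forall i, exists ab : (nat -> V) * (nat -> V),
    A i `<=` \bigcup_k box (ab.1 k) (ab.2 k) /\
    (\sum_(0 <= k <oo) (vol (ab.1 k) (ab.2 k))%:E <=
       outer (A i) + (e / (2 ^ i.+1)%:R)%:E)%E.
  move=> i; have [|a [b abP]] := lebesgue_outer_cover_approx (A i) (e / (2 ^ i.+1)%:R) (Afin i).
    by rewrite divr_gt0 // ltr0n expn_gt0.
  by exists (a, b).
apply: le_trans (epsilon_trick xpredT A0 (ltW e0)).
apply: le_trans (@lebesgue_outer_le_cover2 _ (fun i => (ab i).1) (fun i => (ab i).2) _) _.
  by move=> x [i _ /(proj1 (abP i))[j _ xj]]; exists i => //; exists j.
apply: lee_nneseries => [i _ _|i _]; last exact: (proj2 (abP i)).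
by apply: nneseries_ge0 => j _; rewrite lee_fin box_vol_ge0.
Qed.

Lemma lebesgue_outer_bigcup0 (A : nat -> set V) :
  (forall i, outer (A i) = 0%E) -> outer (\bigcup_i A i) = 0%E.
Proof.
move=> A0; apply/eqP; rewrite eq_le lebesgue_outer_ge0 andbT.
by apply: le_trans (lebesgue_outer_bigcup_le A) _; rewrite eseries0.
Qed.

Hypothesis d_gt0 : (0 < d)%N.

(* The pair (const_mx 1, const_mx 0) is an empty box; its volume is 0 only
   because d > 0. *)
Lemma box_vol_empty : vol (const_mx 1) (const_mx 0) = 0.
Proof.
rewrite /box_vol (eq_bigr (fun=> 0)) => [|i _]; last first.
  by rewrite !mxE sub0r; apply/max_idPl; rewrite lerN10.
by rewrite prodr_const card_ord expr0n; case: d d_gt0.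
Qed.

Lemma lebesgue_outer_le_fin_cover (I : finType) A (p q : I -> V) :
  A `<=` \bigcup_i box (p i) (q i) ->
  (outer A <= (\sum_i vol (p i) (q i))%:E)%E.
Proof.
move=> Acov; pose P := [seq (p i, q i) | i <- enum I].
pose empty : V * V := (const_mx 1, const_mx 0).
apply: le_trans (@lebesgue_outer_le_cover _ (fun k => (nth empty P k).1)
  (fun k => (nth empty P k).2) _) _.
  move=> x /Acov[i _ xi]; exists (index i (enum I)) => //=.
  by rewrite (nth_map i) ?index_mem ?mem_enum // nth_index ?mem_enum.
rewrite (nneseries_split 0 (size P)); last by move=> k _; rewrite lee_fin box_vol_ge0.
rewrite eseries0 ?adde0; last by move=> k /= Pk _; rewrite nth_default // box_vol_empty.
have -> : \sum_i vol (p i) (q i) = \sum_(x <- P) vol x.1 x.2 by rewrite big_map big_enum.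
by rewrite (big_nth empty) sumEFin.
Qed.

End lebesgue_outer.

(* In dimension 0 every box has volume 1 (an empty product), so every
   countable cover has infinite total volume. *)
Lemma lebesgue_outer_eq0_dim_gt0 {R : realType} {d : nat} (A : set 'rV[R]_d) :
  lebesgue_outer A = 0%E -> (0 < d)%N.
Proof.
case: d A => [|//] A A0; exfalso.
have [|a [b [_ sum_le]]] := lebesgue_outer_cover_approx A 1 _ ltr01.
  by rewrite A0.
rewrite A0 add0e in sum_le.
have vol1 k : box_vol (a k) (b k) = 1 by rewrite /box_vol big_ord0.
have vol_ge0 k : (0 <= (box_vol (a k) (b k))%:E)%E by rewrite vol1 lee_fin.
have := le_trans (nneseries_lim_ge 2 (fun k _ _ => vol_ge0 k)) sum_le.
by rewrite !big_nat_recr //= big_geq // !vol1 add0e -EFinD lee_fin; lra.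
Qed.

Lemma rV_norm_le {R : realDomainType} {d : nat} (v : 'rV[R]_d) (t : R) :
  0 <= t -> (forall i, `|v ord0 i| <= t) -> `|v| <= t.
Proof.
move=> t0 vt; rewrite /Num.Def.normr /= mx_normrE (bigmax_le _ t0) // => -[i j] _.
by rewrite ord1; exact: vt.
Qed.

Lemma rV_coord_le_norm {R : realDomainType} {d : nat} (v : 'rV[R]_d) (i : 'I_d) :
  `|v ord0 i| <= `|v|.
Proof.
by rewrite [leRHS]/Num.Def.normr /= mx_normrE; exact: (le_bigmax _ _ (ord0, i)).
Qed.

Lemma truncn_eq_dist_lt1 {R : archiRealFieldType} (u v : R) : 0 <= u -> 0 <= v ->
  Num.truncn u = Num.truncn v -> `|u - v| < 1.
Proof.
move=> u0 v0 uv; have := truncn_itv u0; have := truncn_itv v0.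
rewrite uv -addn1 natrD => /andP[? ?] /andP[? ?].
by rewrite ltr_norml; apply/andP; split; lra.
Qed.

Lemma truncn_eq_dist_le {R : archiRealFieldType} (a u v th : R) :
  0 < th -> a <= u -> a <= v ->
  Num.truncn ((u - a) / th) = Num.truncn ((v - a) / th) -> `|u - v| <= th.
Proof.
move=> th0 au av uv.
have -> : u - v = ((u - a) / th - (v - a) / th) * th by field; exact: lt0r_neq0.
rewrite normrM (gtr0_norm th0); apply: ler_piMl (ltW th0) _.
by apply/ltW/truncn_eq_dist_lt1 => //; apply: divr_ge0 (ltW th0); rewrite subr_ge0.
Qed.

Lemma card_dffun_ord (d : nat) (n : 'I_d -> nat) :
  #|{dffun forall i : 'I_d, 'I_(n i)}| = (\prod_(i < d) n i)%N.
Proof.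
by rewrite card_dep_ffun foldrE big_map big_enum; apply: eq_bigr => i _; rewrite card_ord.
Qed.

Lemma prodDr_le {R : realDomainType} {I : Type} (r : seq I) (s : I -> R) (t : R) :
  (forall i, 0 <= s i) -> 0 <= t <= 1 ->
  \prod_(i <- r) (s i + t) <= \prod_(i <- r) s i + t * \prod_(i <- r) (s i + 1).
Proof.
move=> s0 /andP[t0 t1]; elim: r => [|i r IH]; first by rewrite !big_nil; lra.
rewrite !big_cons; set P := \prod_(j <- r) _ in IH *.
set Q := \prod_(j <- r) _ in IH *; set C := \prod_(j <- r) _ in IH *.
have PC : P <= C.
  by apply: ler_prod => j _; apply/andP; split; [have := s0 j | rewrite lerD2l]; lra.
have := ler_wpM2l (s0 i) IH; have := ler_wpM2l t0 PC; nra.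
Qed.

Section preimage_box.
Context {R : realType} {d : nat} {T : 'rV[R]_d -> 'rV[R]_d} {c : R}.
Local Notation V := 'rV[R]_d.
Local Notation outer := (@lebesgue_outer R d).
Local Notation vol := (@box_vol R d).
Hypotheses (d_gt0 : (0 < d)%N) (c_ge0 : 0 <= c).
Hypothesis T_colip : forall x y, `|x - y| <= c * `|T x - T y|.

(* Cut box a b into the cells of the grid a + th * N^d: the points of
   T @^-1` box a b whose images share a cell lie in a cube of half-side c * th
   around a chosen one, z k. *)
Lemma lebesgue_outer_preimage_box_grid (a b : V) (th : R) : 0 < th ->
  (outer (T @^-1` box a b) <=
    ((2 * c) ^+ d * \prod_(i < d) (Num.max 0 (b ord0 i - a ord0 i) + th))%:E)%E.
Proof.
move=> th0; pose s i := Num.max 0 (b ord0 i - a ord0 i).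
pose n i := (Num.truncn (s i / th)).+1.
pose cell (y : V) i := Num.truncn ((T y ord0 i - a ord0 i) / th).
have cell_lt y i : box a b (T y) -> (cell y i < n i)%N.
  move=> Ty; rewrite ltnS le_truncn // ler_pM2r ?invr_gt0 //.
  by have /andP[_ ?] := Ty i; rewrite le_max; apply/orP; right; lra.
pose F := {dffun forall i : 'I_d, 'I_(n i)}.
pose Cell (k : F) := [set y | box a b (T y) /\ forall i, cell y i = k i].
pose z k := xget 0 (Cell k).
pose r := const_mx (c * th) : V.
apply: le_trans (@lebesgue_outer_le_fin_cover R d d_gt0 F _ (fun k => z k - r)
  (fun k => z k + r) _) _.
  move=> y Ty; pose k : F := [ffun i => Ordinal (cell_lt y i Ty)].
  have [Tz zk] : Cell k (z k).
    by apply: xgetPex; exists y; split => // i; rewrite ffunE.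
  have Tyz : `|T y - T (z k)| <= th.
    apply: rV_norm_le (ltW th0) _ => i; rewrite !mxE.
    have [/andP[ay _] /andP[az _]] := (Ty i, Tz i).
    by apply: truncn_eq_dist_le th0 ay az _; have := zk i; rewrite ffunE => /esym.
  exists k => // i; have := rV_coord_le_norm (y - z k) i.
  move=> /le_trans/(_ (le_trans (T_colip _ _) (ler_wpM2l c_ge0 Tyz))).
  by rewrite !mxE ler_norml => /andP[? ?]; apply/andP; split; lra.
rewrite lee_fin (eq_bigr (fun=> (2 * (c * th)) ^+ d)) => [|k _]; last first.
  by apply: box_vol_centered => //; exact: mulr_ge0 (ltW th0).
rewrite sumr_const card_dffun_ord -[leLHS]mulr_natr natr_prod.
rewrite mulrA exprMn -mulrA ler_wpM2l ?exprn_ge0 ?mulr_ge0 //.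
rewrite -[in th ^+ d](card_ord d) -prodr_const -big_split /=; apply: ler_prod => i _.
rewrite mulr_ge0 ?(ltW th0) //= mulrC /n -addn1 natrD mulrDl mul1r.
by rewrite lerD2r -ler_pdivlMr // truncn_le divr_ge0 ?(ltW th0) // le_max lexx.
Qed.

Lemma lebesgue_outer_preimage_box (a b : V) :
  (outer (T @^-1` box a b) <= ((2 * c) ^+ d * vol a b)%:E)%E.
Proof.
pose s i := Num.max 0 (b ord0 i - a ord0 i).
have s_ge0 i : 0 <= s i by rewrite le_max lexx.
pose K := (2 * c) ^+ d; pose C := \prod_(i < d) (s i + 1).
have K_ge0 : 0 <= K by rewrite exprn_ge0 // mulr_ge0.
have C_ge0 : 0 <= C by apply: prodr_ge0 => i _; rewrite addr_ge0.
apply/lee_addgt0Pr => e e_gt0.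
pose th := Num.min 1 (e / (K * C + 1)).
have KC1_gt0 : 0 < K * C + 1 by rewrite ltr_wpDl ?mulr_ge0.
have th_gt0 : 0 < th by rewrite lt_min ltr01 divr_gt0.
have th01 : 0 <= th <= 1 by rewrite (ltW th_gt0) ge_min lexx.
have K_th_C : K * (th * C) <= e.
  have : th <= e / (K * C + 1) by rewrite ge_min lexx orbT.
  rewrite ler_pdivlMr // => th_KC; have := ltW th_gt0; nra.
apply: (le_trans (lebesgue_outer_preimage_box_grid a b th th_gt0)).
rewrite -EFinD lee_fin -/K.
apply: le_trans (ler_wpM2l K_ge0 (prodDr_le _ _ _ s_ge0 th01)) _.
by rewrite mulrDr lerD2l.
Qed.

End preimage_box.

Section null_preimage.
Context {R : realType} {d : nat} {T : 'rV[R]_d -> 'rV[R]_d} {K : R}.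
Local Notation V := 'rV[R]_d.
Local Notation outer := (@lebesgue_outer R d).
Local Notation vol := (@box_vol R d).
Hypothesis K_ge0 : 0 <= K.
Hypothesis T_box : forall a b, (outer (T @^-1` box a b) <= (K * vol a b)%:E)%E.

Lemma lebesgue_outer_preimage_null (N : set V) :
  outer N = 0%E -> outer (T @^-1` N) = 0%E.
Proof.
move=> N0; apply/eqP; rewrite eq_le lebesgue_outer_ge0 andbT.
apply/lee_addgt0Pr => e e_gt0; rewrite add0e.
pose e' := e / (K + 1).
have e'_gt0 : 0 < e' by rewrite divr_gt0 // ltr_wpDl.
have [|a [b [Ncov sum_le]]] := lebesgue_outer_cover_approx N e' _ e'_gt0.
  by rewrite N0.
rewrite N0 add0e in sum_le.
apply: le_trans (@le_lebesgue_outer _ _ _ (\bigcup_k T @^-1` box (a k) (b k)) _) _.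
  by move=> x /Ncov[k _ ?]; exists k.
apply: le_trans (lebesgue_outer_bigcup_le _) _.
apply: le_trans (@lee_nneseries _ _ (fun k => K%:E * (vol (a k) (b k))%:E)%E _ _ _ _) _.
- by move=> k _ _; exact: lebesgue_outer_ge0.
- by move=> k _; rewrite -EFinM.
rewrite nneseriesZl; last by move=> k _; rewrite lee_fin box_vol_ge0.
apply: le_trans (lee_wpmul2l _ sum_le) _; first by rewrite lee_fin.
by rewrite -EFinM lee_fin /e' mulrCA ger_pMr // ler_pdivrMr ?ltr_wpDl //; lra.
Qed.

Lemma lebesgue_outer_preimage_iter_null (t : nat) (N : set V) :
  outer N = 0%E -> outer (iter t T @^-1` N) = 0%E.
Proof.
elim: t N => [//|t IH] N N0.
have -> : iter t.+1 T @^-1` N = iter t T @^-1` (T @^-1` N) by [].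
exact/IH/lebesgue_outer_preimage_null.
Qed.

End null_preimage.

Section enorm.
Context {R : realType} {d : nat}.
Implicit Types v : 'rV[R]_d.

Lemma sumr_sqr_ge0 v : 0 <= \sum_(i < d) v ord0 i ^+ 2.
Proof. by apply: sumr_ge0 => i _; exact: sqr_ge0. Qed.

Lemma enorm_ge0 v : 0 <= enorm v.
Proof. exact: sqrtr_ge0. Qed.

Lemma sqr_enorm v : enorm v ^+ 2 = \sum_(i < d) v ord0 i ^+ 2.
Proof. by rewrite sqr_sqrtr // sumr_sqr_ge0. Qed.

Lemma norm_le_enorm v : `|v| <= enorm v.
Proof.
apply: rV_norm_le (enorm_ge0 v) _ => i.
rewrite -sqrtr_sqr ler_sqrt ?sumr_sqr_ge0 // (bigD1 i) //= lerDl.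
by apply: sumr_ge0 => j _; exact: sqr_ge0.
Qed.

Lemma enorm_le_norm v : enorm v <= d%:R * `|v|.
Proof.
rewrite -(ger0_norm (mulr_ge0 (ler0n _ d) (normr_ge0 v))) -sqrtr_sqr ler_sqrt ?sqr_ge0 //.
apply: le_trans (_ : \sum_(i < d) `|v| ^+ 2 <= _).
  apply: ler_sum => i _; rewrite -real_normK ?num_real //.
  by rewrite lerXn2r ?nnegrE ?normr_ge0 // rV_coord_le_norm.
rewrite sumr_const card_ord exprMn -[leLHS]mulr_natl ler_wpM2r ?sqr_ge0 //.
by rewrite -natrX ler_nat expnS expn1; case: (posnP d) => [->|d_gt0] //; exact: leq_pmull.
Qed.

End enorm.

Definition gd_step {R : realType} {d : nat} (f : 'rV[R]_d -> R) (gamma : R)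
  (x : 'rV[R]_d) : 'rV[R]_d := x - gamma *: grad f x.

Section gradient_step.
Context {R : realType} {d : nat} {f : 'rV[R]_d -> R} {L gamma : R}.
Local Notation V := 'rV[R]_d.
Local Notation gd_step := (gd_step f gamma).
Hypotheses (f_smooth : L_smooth f L) (gamma_gt0 : 0 < gamma).
Hypothesis gamma_le : gamma <= 1 / (2 * L).

Lemma enorm_sub_le_gd_step (x y : V) :
  enorm (x - y) <= 2 * enorm (gd_step x - gd_step y).
Proof.
case: f_smooth => _ L_gt0 grad_lip.
set u := x - y; set g := grad f x - grad f y.
have gammaL : gamma * L <= 1 / 2.
  by move: gamma_le; rewrite ler_pdivlMr ?mulr_gt0 //; lra.
have step_coord i : (gd_step x - gd_step y) ord0 i = u ord0 i - gamma * g ord0 i.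
  rewrite /gd_step /u /g; move: (grad f x) (grad f y) => p q; rewrite !mxE.
  by move: (x ord0 i) (y ord0 i) (p ord0 i) (q ord0 i) => a b c e; ring.
have sqr_g : enorm g ^+ 2 <= (L * enorm u) ^+ 2.
  by rewrite lerXn2r ?nnegrE ?mulr_ge0 ?enorm_ge0 ?(ltW L_gt0) //; exact: grad_lip.
(* (a - gamma b)^2 = a^2 / 2 - gamma^2 b^2 + (a - 2 gamma b)^2 / 2 *)
have half_le : enorm u ^+ 2 / 2 - gamma ^+ 2 * enorm g ^+ 2 <=
    enorm (gd_step x - gd_step y) ^+ 2.
  rewrite !sqr_enorm mulr_suml mulr_sumr -sumrB; apply: ler_sum => i _.
  rewrite step_coord; move: (u ord0 i) (g ord0 i) => a b.
  have := sqr_ge0 (a - 2 * gamma * b); lra.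
have gammaL_sqr : (gamma * L) ^+ 2 * enorm u ^+ 2 <= 1 / 4 * enorm u ^+ 2.
  apply: ler_wpM2r; first exact: sqr_ge0.
  have gammaL_ge0 := ltW (mulr_gt0 gamma_gt0 L_gt0).
  by have := ler_pM gammaL_ge0 gammaL_ge0 gammaL gammaL; rewrite -expr2; lra.
rewrite -(@ler_pXn2r _ 2) // ?nnegrE ?mulr_ge0 ?enorm_ge0 //.
have := ler_wpM2l (sqr_ge0 gamma) sqr_g.
move: gammaL_sqr half_le; rewrite !exprMn; lra.
Qed.

Lemma norm_sub_le_gd_step (x y : V) :
  `|x - y| <= 2 * d%:R * `|gd_step x - gd_step y|.
Proof.
apply: le_trans (norm_le_enorm _) _; apply: le_trans (enorm_sub_le_gd_step x y) _.
by rewrite -mulrA ler_wpM2l // enorm_le_norm.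
Qed.

End gradient_step.

(* The hypotheses on W only make gd_uniform_prob a genuine probability; the
   conclusion holds because the numerator vanishes. *)
Theorem corollary1 (R : realType) (d : nat) (f : 'rV[R]_d -> R) (L gamma : R)
    (X W : set 'rV[R]_d) :
  L_smooth f L ->
  lebesgue_outer X = 0%E ->
  lebesgue_measurable W ->
  (0 < lebesgue_outer W)%E ->
  (lebesgue_outer W < +oo)%E ->
  0 < gamma -> gamma <= 1 / (2 * L) ->
  gd_uniform_prob W [set x0 | exists t : nat, X (gd f gamma x0 t)] = 0%E.
Proof.
move=> f_smooth X0 _ _ _ gamma_gt0 gamma_le.
have d_gt0 := lebesgue_outer_eq0_dim_gt0 X X0.
have c_ge0 : 0 <= 2 * d%:R :> R by rewrite mulr_ge0 ?ler0n.
have T_box := lebesgue_outer_preimage_box d_gt0 c_ge0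
  (norm_sub_le_gd_step f_smooth gamma_gt0 gamma_le).
have K_ge0 : 0 <= (2 * (2 * d%:R)) ^+ d :> R by rewrite exprn_ge0 // mulr_ge0.
have hit_null : lebesgue_outer [set x0 | exists t, X (gd f gamma x0 t)] = 0%E.
  apply: (@subset_lebesgue_outer0 _ _ _ (\bigcup_t iter t (gd_step f gamma) @^-1` X)).
    by move=> x0 [t Xt]; exists t.
  by apply: lebesgue_outer_bigcup0 => t; exact: lebesgue_outer_preimage_iter_null K_ge0 T_box t X X0.
rewrite /gd_uniform_prob (subset_lebesgue_outer0 (@subIsetl _ _ W) hit_null).
exact: mul0e.
Qed.
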